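(* Let $(\mathbb S,+,\cdot)$ be an S-Field. Then $(\mathbb S_0,+,\cdot)$ (operations restricted to $\mathbb S_0$) forms a Field with Unity $1$, where $e=1$ is the Unity of $(\mathbb S,+,\cdot)$.
   Context: An S-Structure is a triple $(\mathbb S,+,\cdot)$ where $\mathbb S$ is a set and $+,\cdot$ are binary operations on $\mathbb S$ such that: $(\mathbb S,+)$ is a commutative group with identity $0$ (the inverse of $s$ is written $-s$, and $s-t:=s+(-t)$); $\mathbb S$ is closed under $\cdot$; and there exists $s\in\mathbb S$ with $0\cdot s\neq 0$ or $s\cdot 0\neq 0$. Multiplication binds tighter than addition. The structures considered come with a distinguished element of $\mathbb S$ denoted $1$. It is Commutative if $s\cdot t=t\cdot s$ for all $s,t$. For a Commutative S-Structure and $\alpha\in\mathbb S$, put $\mathbb S_\alpha=\{s\in\mathbb S:0\cdot s=s\cdot 0=\alpha\}$ and $\Lambda=\{\alpha\in\mathbb S:\mathbb S_\alpha\neq\emptyset\}$. Wheel Distributive: $s\cdot(t+r)+(s\cdot 0)=(s\cdot t)+(s\cdot r)$ for all $s,t,r\in\mathbb S$. S-Associative: for all $m,n\in\mathbb S_0$ and $s\in\mathbb S$, $m\cdot(n\cdot s)=(m\cdot n)\cdot s-([(m-1)\cdot(n-1)]\cdot(0\cdot s))$. Base: if $\mathbb S_0\neq\emptyset$ and $\alpha\in\Lambda$, $q\in\mathbb S_\alpha$ is a Base for $\mathbb S_\alpha$ if $q+\beta\in\mathbb S_\alpha$ for all $\beta\in\mathbb S_0$ and every $s\in\mathbb S_\alpha$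 equals $q+\beta$ for some $\beta\in\mathbb S_0$. Coordinated: $\mathbb S_0\neq\emptyset$ and every $\mathbb S_\alpha$ with $\alpha\in\Lambda$ has a Base. Standard Bases: a Coordinated Commutative S-Structure has Standard Bases if there is a specified element $q_0(1)\in\mathbb S_1$ which is a Base for $\mathbb S_1$, and for every $\alpha\in\Lambda$ the element $q_0(\alpha):=\alpha\cdot(q_0(1)+1)-1$ lies in $\mathbb S_\alpha$ and is a Base for $\mathbb S_\alpha$. An Essential S-Structure is an S-Structure that is Commutative, Wheel Distributive, S-Associative, has Standard Bases (in particular is Coordinated), satisfies $0,1\in\mathbb S_0$, and satisfies $\mathbb S_0=\{1\cdot x:x\in\mathbb S_0\}$. A Unity is an element $e\in\Lambda$ with $e\cdot s=s\cdot e=s$ for all $s\in\mathbb S$. Scalar Inverses: the structure has a Unity $e$ and for every $x\in\mathbb S_0$ with $x\neq 0$ there is $x^{-1}\in\mathbb S_0$ with $x\cdot x^{-1}=x^{-1}\cdot x=e$. An S-Ring is an Essential S-Structure with a Unity; an S-Field is an S-Ring with Scalar Inverses. *)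

Record SSig := MkSSig {
  car  : Type;
  sadd : car -> car -> car;
  sopp : car -> car;
  szero : car;
  smul : car -> car -> car;
  sone : car
}.

Section SDefs.
Variable S : SSig.
Local Notation T := (car S).
Local Notation "x + y" := (sadd S x y).
Local Notation "- x" := (sopp S x).
Local Notation "x - y" := (sadd S x (sopp S y)).
Local Notation "x * y" := (smul S x y).
Local Notation "0" := (szero S).
Local Notation "1" := (sone S).

(* (S,+) is a commutative group with identity 0 and inverse -; S is closed
   under * (automatic, * : T -> T -> T); and 0*s <> 0 or s*0 <> 0 for some s. *)
Definition IsSStructure : Prop :=
  (forall x y z : T, x + (y + z) = (x + y) + z) /\
  (forall x y : T, x + y = y + x) /\
  (forall x : T, x + 0 = x) /\
  (forall x : T, x + (- x) = 0) /\
  (exists s : T, 0 * s <> 0 \/ s * 0 <> 0).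

Definition SCommutative : Prop := forall s t : T, s * t = t * s.

Definition S_ (alpha s : T) : Prop := 0 * s = alpha /\ s * 0 = alpha.

Definition Lam (alpha : T) : Prop := exists s : T, S_ alpha s.

Definition WheelDistributive : Prop :=
  forall s t r : T, s * (t + r) + (s * 0) = (s * t) + (s * r).

Definition SAssociative : Prop :=
  forall m n s : T, S_ 0 m -> S_ 0 n ->
    m * (n * s) = (m * n) * s - (((m - 1) * (n - 1)) * (0 * s)).

Definition IsBase (alpha q : T) : Prop :=
  S_ alpha q /\
  (forall beta : T, S_ 0 beta -> S_ alpha (q + beta)) /\
  (forall s : T, S_ alpha s -> exists beta : T, S_ 0 beta /\ s = q + beta).

Definition Coordinated : Prop :=
  (exists s : T, S_ 0 s) /\
  (forall alpha : T, Lam alpha -> exists q : T, IsBase alpha q).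

Definition StandardBases : Prop :=
  Coordinated /\
  exists q01 : T,
    IsBase 1 q01 /\
    forall alpha : T, Lam alpha ->
      S_ alpha (alpha * (q01 + 1) - 1) /\ IsBase alpha (alpha * (q01 + 1) - 1).

Definition Essential : Prop :=
  IsSStructure /\ SCommutative /\ WheelDistributive /\ SAssociative /\
  StandardBases /\ S_ 0 0 /\ S_ 0 1 /\
  (forall y : T, S_ 0 y <-> exists x : T, S_ 0 x /\ y = 1 * x).

Definition IsUnity (e : T) : Prop :=
  Lam e /\ forall s : T, e * s = s /\ s * e = s.

Definition ScalarInversesWrt (e : T) : Prop :=
  forall x : T, S_ 0 x -> x <> 0 ->
    exists xi : T, S_ 0 xi /\ x * xi = e /\ xi * x = e.

Definition SRing : Prop := Essential /\ exists e : T, IsUnity e.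

Definition SField : Prop :=
  Essential /\ exists e : T, IsUnity e /\ ScalarInversesWrt e.

Definition IsFieldOnWithUnity (P : T -> Prop) : Prop :=
  P 0 /\ P 1 /\
  (forall x y, P x -> P y -> P (x + y)) /\
  (forall x, P x -> P (- x)) /\
  (forall x y, P x -> P y -> P (x * y)) /\
  (forall x y z, P x -> P y -> P z -> x + (y + z) = (x + y) + z) /\
  (forall x y, P x -> P y -> x + y = y + x) /\
  (forall x, P x -> x + 0 = x) /\
  (forall x, P x -> x + (- x) = 0) /\
  (forall x y z, P x -> P y -> P z -> x * (y * z) = (x * y) * z) /\
  (forall x y, P x -> P y -> x * y = y * x) /\
  (forall x, P x -> 1 * x = x /\ x * 1 = x) /\
  (forall x y z, P x -> P y -> P z -> x * (y + z) = x * y + x * z) /\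
  (forall x y z, P x -> P y -> P z -> (x + y) * z = x * z + y * z) /\
  1 <> 0 /\
  (forall x, P x -> x <> 0 -> exists y, P y /\ x * y = 1 /\ y * x = 1).

End SDefs.

(* Every x in S_0 satisfies x * 0 = 0, so Wheel Distributivity degenerates to
   ordinary distributivity on the left of x, and S-Associativity loses its
   correction term as soon as (m - 1) * (n - 1) lies in S_0 and 0 * s = 0.
   Applying S-Associativity to (1, 0, q) with q in S_1 gives 1 * 1 = 1; writing
   a unity e as 1 * x with x in S_0 and applying it to (x, 1, 1) gives e = 1.
   With 1 a unity, (-1) * m = - m on S_0, which makes S_0 closed under products
   and the correction term vanish on S_0; the field axioms follow. *)


Section SField_scalars.

Variable S : SSig.
Local Notation T := (car S).
Local Notation "x + y" := (sadd S x y).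
Local Notation "- x" := (sopp S x).
Local Notation "x - y" := (sadd S x (sopp S y)).
Local Notation "x * y" := (smul S x y).
Local Notation "0" := (szero S).
Local Notation "1" := (sone S).
Local Notation S0 := (S_ S 0).

Hypothesis addrA : forall x y z : T, x + (y + z) = (x + y) + z.
Hypothesis addrC : forall x y : T, x + y = y + x.
Hypothesis addr0 : forall x : T, x + 0 = x.
Hypothesis addrN : forall x : T, x + - x = 0.

Lemma add0r x : 0 + x = x.
Proof. rewrite addrC; apply addr0. Qed.

Lemma addrI a b c : a + b = a + c -> b = c.
Proof.
  intros H.
  rewrite <- (add0r b), <- (add0r c), <- (addrN a), (addrC a (- a)), <- !addrA, H.
  reflexivity.
Qed.

Lemma addr_eq0 a b : a + b = 0 -> b = - a.
Proof. intros H; apply (addrI a); rewrite H, addrN; reflexivity. Qed.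

Lemma oppr0 : - 0 = 0.
Proof. symmetry; apply addr_eq0, addr0. Qed.

Lemma opprK a : - - a = a.
Proof. symmetry; apply addr_eq0; rewrite addrC; apply addrN. Qed.

Hypothesis mulrC : forall s t : T, s * t = t * s.
Hypothesis mul_wheelD : forall s t r : T, s * (t + r) + s * 0 = s * t + s * r.
Hypothesis mul_SA : SAssociative S.
Hypothesis S0_0 : S0 0.
Hypothesis S0_1 : S0 1.

Lemma S0_mulrD m t r : S0 m -> m * (t + r) = m * t + m * r.
Proof. intros [_ Hm]; rewrite <- mul_wheelD, Hm, addr0; reflexivity. Qed.

Lemma S0_mulrN m t : S0 m -> m * - t = - (m * t).
Proof.
  intros Hm; apply addr_eq0.
  rewrite <- (S0_mulrD m t (- t) Hm), addrN; apply Hm.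
Qed.

Lemma mul0_S0 x : 0 * x = 0 -> S0 x.
Proof. intros Hx; split; [| rewrite mulrC]; exact Hx. Qed.

Lemma S0_add x y : S0 x -> S0 y -> S0 (x + y).
Proof.
  intros [Hx _] [Hy _]; apply mul0_S0.
  rewrite (S0_mulrD 0 x y S0_0), Hx, Hy; apply addr0.
Qed.

Lemma S0_opp x : S0 x -> S0 (- x).
Proof.
  intros [Hx _]; apply mul0_S0.
  rewrite (S0_mulrN 0 x S0_0), Hx; apply oppr0.
Qed.

Lemma S0_subr1 x : S0 x -> S0 (x - 1).
Proof. intros Hx; apply S0_add, S0_opp, S0_1; exact Hx. Qed.

Lemma S0_mulA m n s :
  S0 m -> S0 n -> S0 ((m - 1) * (n - 1)) -> 0 * s = 0 -> m * (n * s) = (m * n) * s.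
Proof.
  intros Hm Hn Hmn Hs.
  rewrite (mul_SA m n s Hm Hn), Hs, (proj2 Hmn), oppr0, addr0; reflexivity.
Qed.

Lemma Lam1_mul11 : Lam S 1 -> 1 * 1 = 1.
Proof.
  intros [q [Hq _]].
  pose proof (mul_SA 1 0 q S0_1 S0_0) as H.
  rewrite Hq, (proj2 S0_1), Hq, addrN, add0r, (S0_mulrN 0 1 S0_0), (proj1 S0_1),
    oppr0, (proj1 S0_1), oppr0, addr0 in H.
  exact H.
Qed.

Lemma unity_eq1 e :
  (forall y, S0 y -> exists x, S0 x /\ y = 1 * x) -> Lam S 1 -> IsUnity S e -> e = 1.
Proof.
  intros S0_mul1 Lam1 [_ He].
  assert (Se : S0 e) by (split; apply He).
  destruct (S0_mul1 e Se) as [x [Hx ->]].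
  assert (Hx1 : S0 ((x - 1) * (1 - 1))).
  { rewrite addrN, (proj2 (S0_subr1 x Hx)); exact S0_0. }
  pose proof (S0_mulA x 1 1 Hx S0_1 Hx1 (proj1 S0_1)) as H.
  rewrite (Lam1_mul11 Lam1), (mulrC x 1), (proj1 (He 1)) in H.
  exact H.
Qed.

Hypothesis mul1r : forall s : T, 1 * s = s.

Lemma mulN1r m : S0 m -> (- (1)) * m = - m.
Proof. intros Hm; rewrite mulrC, (S0_mulrN m 1 Hm), mulrC, mul1r; reflexivity. Qed.

Lemma S0_mul x y : S0 x -> S0 y -> S0 (x * y).
Proof.
  intros Hx Hy; apply mul0_S0.
  assert (Hx1 : S0 ((0 - 1) * (x - 1))).
  { rewrite add0r, (mulN1r (x - 1) (S0_subr1 x Hx)); apply S0_opp, S0_subr1, Hx. }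
  rewrite (S0_mulA 0 x y S0_0 Hx Hx1 (proj1 Hy)), (proj1 Hx); apply Hy.
Qed.

Lemma S0_mulrA x y z : S0 x -> S0 y -> S0 z -> x * (y * z) = (x * y) * z.
Proof.
  intros Hx Hy Hz; apply S0_mulA; try assumption.
  - apply S0_mul; apply S0_subr1; assumption.
  - apply Hz.
Qed.

Lemma mul0_mul0 s : 0 * (0 * s) = 0.
Proof.
  rewrite (mul_SA 0 0 s S0_0 S0_0), (proj1 S0_0), add0r,
    (mulN1r (- (1)) (S0_opp 1 S0_1)), opprK, mul1r; apply addrN.
Qed.

Lemma oner_neq0 : (exists s, 0 * s <> 0 \/ s * 0 <> 0) -> 1 <> 0.
Proof.
  intros [s Hs] E.
  assert (Hall : forall t, t = 0).
  { intros t; transitivity (1 * (1 * t)); [rewrite !mul1r; reflexivity |].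
    rewrite E; apply mul0_mul0. }
  destruct Hs as [H | H]; apply H, Hall.
Qed.

Lemma S0_field :
  (exists s, 0 * s <> 0 \/ s * 0 <> 0) -> ScalarInversesWrt S 1 ->
  IsFieldOnWithUnity S S0.
Proof.
  intros Hnontriv Hinv; unfold IsFieldOnWithUnity.
  repeat match goal with |- _ /\ _ => split end.
  - exact S0_0.
  - exact S0_1.
  - exact S0_add.
  - exact S0_opp.
  - exact S0_mul.
  - intros x y z _ _ _; apply addrA.
  - intros x y _ _; apply addrC.
  - intros x _; apply addr0.
  - intros x _; apply addrN.
  - exact S0_mulrA.
  - intros x y _ _; apply mulrC.
  - intros x _; split; [| rewrite mulrC]; apply mul1r.
  - intros x y z Hx _ _; apply S0_mulrD, Hx.
  - intros x y z _ _ Hz; rewrite !(mulrC _ z); apply S0_mulrD, Hz.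
  - exact (oner_neq0 Hnontriv).
  - exact Hinv.
Qed.

End SField_scalars.

Theorem theorem3p3p1 (S : SSig) :
  SField S ->
  IsFieldOnWithUnity S (S_ S (szero S)) /\
  (forall e : car S, IsUnity S e -> e = sone S).
Proof.
  intros [[[addrA [addrC [addr0 [addrN Hnontriv]]]]
           [mulrC [mul_wheelD [mul_SA [[_ [q1 [[Hq1 _] _]]] [S0_0 [S0_1 S0_mul1]]]]]]]
          [e [He Hinv]]].
  assert (Lam1 : Lam S (sone S)) by (exists q1; exact Hq1).
  assert (unity_is_1 : forall u, IsUnity S u -> u = sone S).
  { intros u Hu; apply (unity_eq1 S); try assumption.
    intros y; apply S0_mul1. }
  split; [| exact unity_is_1].
  pose proof (unity_is_1 e He) as ->.
  apply S0_field; try assumption.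
  intros s; apply He.
Qed.
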